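(* Let $G$ be a topological group. Then $L^0(G)$ is the closure of $\bigcup_{n\ge1}h_n(G^n)$.
   Context: Let $\lambda$ be Lebesgue measure on $[0,1]$. A map $f\colon [0,1]\to G$ is strongly $\lambda$-measurable if for every $\epsilon>0$ there is a closed $A\subseteq[0,1]$ with $\lambda([0,1]\setminus A)\le\epsilon$ and $f|_A$ continuous. $L^{0}(G)$ is the set of $\lambda$-a.e. equivalence classes of strongly $\lambda$-measurable maps $[0,1]\to G$, with pointwise group operations and the topology of convergence in measure: a neighbourhood basis of the identity consists of the sets $N(U,\epsilon)=\{f : \lambda(\{x: f(x)\notin U\})<\epsilon\}$, $U$ an open identity neighbourhood in $G$, $\epsilon>0$. For $n\ge1$, $h_n\colon G^n\to L^0(G)$ sends $(g_1,\dots,g_n)$ to the map which is constantly $g_i$ on $[(i-1)/n,i/n)$ for $i=1,\dots,n$. *)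

From HB Require Import structures.
From mathcomp Require Import all_boot all_order all_algebra.
From mathcomp Require Import all_classical all_reals all_analysis.
Set Implicit Arguments. Unset Strict Implicit. Unset Printing Implicit Defensive.
Import Order.TTheory GRing.Theory Num.Theory numFieldNormedType.Exports.
Local Open Scope classical_set_scope.
Local Open Scope ring_scope.

Definition I01 (R : realType) : set R := `[0, 1].

Definition topological_group (G : topologicalType)
  (mul : G -> G -> G) (inv : G -> G) (e : G) : Prop :=
  [/\ (forall x y z, mul x (mul y z) = mul (mul x y) z),
      (forall x, mul e x = x),
      (forall x, mul (inv x) x = e),
      continuous (fun p : G * G => mul p.1 p.2) &
      continuous inv].

(* Outer Lebesgue measure strictly below eps:  lambda^*(S) < eps. *)
Definition lam_lt (R : realType) (S : set R) (eps : R) : Prop :=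
  exists B : set R, [/\ measurable B, S `<=` B &
    (@lebesgue_measure R B < eps%:E)%E].

(* Strong lambda-measurability of f : [0,1] -> G (f given on all of R,
   only its values on [0,1] matter). *)
Definition strongly_measurable (R : realType) (G : topologicalType)
  (f : R -> G) : Prop :=
  forall eps : R, 0 < eps ->
    exists A : set R, [/\ closed A, A `<=` (@I01 R),
      (@lebesgue_measure R ((@I01 R) `\` A) <= eps%:E)%E &
      {within A, continuous f}].

(* h_{n+1} : G^(n+1) -> L^0(G): constantly g_i on [i/(n+1), (i+1)/(n+1))
   (0-based index i); at x = 1 it takes the value g_n. *)
Definition hstep (R : realType) (G : Type) (n : nat) (g : 'I_n.+1 -> G)
  : R -> G :=
  fun x => g (inord (minn (Num.truncn (x *+ n.+1)) n)).

(* [f] lies in the closure (in L^0(G), topology of convergence in measure)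
   of the set of classes of the maps in S: every basic neighbourhood
   [f] * N(U, eps) of [f] meets S. *)
Definition in_L0_closure (R : realType) (G : topologicalType)
  (mul : G -> G -> G) (inv : G -> G) (e : G)
  (S : set (R -> G)) (f : R -> G) : Prop :=
  forall U : set G, open U -> U e ->
  forall eps : R, 0 < eps ->
    exists s : R -> G, S s /\
      lam_lt [set x | (@I01 R) x /\ ~ U (mul (inv (f x)) (s x))] eps.

Definition step_maps (R : realType) (G : Type) : set (R -> G) :=
  [set s | exists (n : nat) (g : 'I_n.+1 -> G), s = @hstep R G n g].

From HB Require Import structures.
From mathcomp Require Import all_boot all_order all_algebra.
From mathcomp Require Import all_classical all_reals all_analysis.
From mathcomp Require Import ring lra measurable_realfun.
Set Implicit Arguments. Unset Strict Implicit. Unset Printing Implicit Defensive.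
Import Order.TTheory GRing.Theory Num.Theory numFieldNormedType.Exports.
Local Open Scope classical_set_scope.
Local Open Scope ring_scope.

(* A step map with n cells is locally constant away from the breakpoints i/n,
   so deleting small balls around them leaves a closed set of almost full
   measure on which it is continuous.  Conversely, if f is continuous on a
   closed A in [0,1] with small complement, A is compact, so f is uniformly
   continuous on A for the left uniformity of G: points of A closer than 1/n
   have values with f(x)^-1 f(a) in U.  Sampling f at a point of A in each cell
   of length 1/n thus gives a step map that is U-close to f on all of A. *)

Section StepIndex.
Variables (R : realType) (n : nat).
Local Notation N := (n.+1%:R : R).

Definition step_index (x : R) : nat := minn (Num.truncn (x *+ n.+1)) n.

Lemma hstepE (G : Type) (g : 'I_n.+1 -> G) x :
  @hstep R G n g x = g (inord (step_index x)).
Proof. by []. Qed.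

Lemma step_index_le x : (step_index x <= n)%N.
Proof. exact: geq_minr. Qed.

Lemma step_index_itv x : 0 <= x <= 1 ->
  (step_index x)%:R / N <= x <= (step_index x).+1%:R / N.
Proof.
move=> /andP[x0 x1].
have xN0 : 0 <= x *+ n.+1 by rewrite mulrn_wge0.
have xNN : x *+ n.+1 <= N by rewrite lerMn2r x1 orbT.
have /andP[lo hi] := truncn_itv xN0.
rewrite ler_pdivrMr // ler_pdivlMr // mulr_natr /step_index.
case: leqP => [tn|nt].
  by rewrite lo ltW.
rewrite xNN andbT.
by apply: le_trans lo; rewrite ler_nat ltnW.
Qed.

Lemma step_indexE x k : (k <= n)%N ->
  k%:R / N <= x < k.+1%:R / N -> step_index x = k.
Proof.
move=> kn; rewrite ler_pdivrMr // ltr_pdivlMr // mulr_natr => /truncn_def tk.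
by rewrite /step_index tk; exact: minn_idPl.
Qed.

End StepIndex.

Lemma dist_le_itv (R : realFieldType) (a b x y : R) :
  a <= x <= b -> a <= y <= b -> `|x - y| <= b - a.
Proof.
by move=> /andP[? ?] /andP[? ?]; rewrite ler_norml; apply/andP; split; lra.
Qed.

Lemma itv_ball_interior (R : realFieldType) (a b x y r : R) :
  a <= x <= b -> r <= `|a - x| -> r <= `|b - x| -> `|x - y| < r -> a < y < b.
Proof.
move=> /andP[ax xb]; rewrite ler0_norm ?subr_le0 // ger0_norm ?subr_ge0 //.
by rewrite ltr_norml => ? ? /andP[? ?]; apply/andP; split; lra.
Qed.

Lemma lebesgue_measure_bigcup_ball_le (R : realType) m (c : nat -> R) r :
  0 <= r ->
  (lebesgue_measure (\bigcup_(i < m) ball (c i) r) <= (r *+ 2 *+ m)%:E)%E.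
Proof.
move=> r0; have mball i : measurable (ball (c i) r).
  exact: open_measurable (ball_open _ _).
apply: (@le_trans _ _ (\sum_(i < m) lebesgue_measure (ball (c i) r))).
  rewrite bigcup_mkord.
  apply: (@content_subadditive _ _ _ (@lebesgue_measure R) _
    (fun i => ball (c i) r) m) => //.
  - by move=> k _; apply: mball.
  - by apply: bigsetU_measurable => k _; apply: mball.
under eq_bigr do rewrite lebesgue_measure_ball //.
by rewrite sumEFin sumr_const card_ord.
Qed.

Lemma hstep_strongly_measurable (R : realType) (G : topologicalType) n
    (g : 'I_n.+1 -> G) :
  strongly_measurable (@hstep R G n g).
Proof.
move=> eps eps0; pose N : R := n.+1%:R.
pose r := eps / n.+2%:R / 2.
have r0 : 0 < r by rewrite !divr_gt0.
pose O := \bigcup_(i < n.+2) ball (i%:R / N) r.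
have oO : open O by apply: bigcup_open => i _; exact: ball_open.
exists (@I01 R `\` O); split.
- by apply: closedI; [exact: interval_closed | exact: open_closedC].
- exact: subDsetl.
- rewrite setDD; apply: (@le_trans _ _ (lebesgue_measure O)).
    apply: le_measure; rewrite ?inE; last exact: subIsetr.
      by apply: measurableI; [exact: measurable_itv | exact: open_measurable].
    exact: open_measurable.
  have <- : r *+ 2 *+ n.+2 = eps.
    by rewrite /r -mulrnA -[LHS]mulr_natr natrM; field.
  exact: lebesgue_measure_bigcup_ball_le (ltW r0).
- apply: continuous_in_subspaceT => x /set_mem [Ix nOx].
  apply: (near_cst_continuous (@hstep R G n g x)).
  have kn := step_index_le n x.
  have xk := step_index_itv n Ix.
  set k := step_index n x in kn xk *.
  have far i : (i < n.+2)%N -> r <= `|i%:R / N - x|.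
    by move=> ilt; rewrite leNgt; apply/negP => bx; apply: nOx; exists i.
  apply/nbhs_ballP; exists r => // y /= xy.
  rewrite !hstepE (@step_indexE _ n y k) //.
  have /andP[ky yk] := itv_ball_interior xk (far k (leqW kn)) (far k.+1 kn) xy.
  by rewrite (ltW ky).
Qed.

Lemma compact_within_continuous_unif (R : realType) (T : pseudoMetricType R)
    (G : topologicalType) (A : set T) (f : T -> G) (Q : set (G * G)) :
  compact A -> {within A, continuous f} -> (forall p : G, nbhs (p, p) Q) ->
  exists2 d : R, 0 < d & forall y z, A y -> A z -> ball y d z -> Q (f y, f z).
Proof.
move=> cA /subspace_continuousP cf Qdiag.
have : \forall d \near (0 : R)^'+, A `<=`
    [set y | A y -> forall z, A z -> ball y d z -> Q (f y, f z)].
  apply: (compact_near_coveringP A).1 => // x Ax.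
  have [[N1 N2] /= [N1x N2x] N12] := Qdiag (f x).
  have : \forall y \near x, A y -> (N1 `&` N2) (f y).
    exact: cf x Ax _ (filterI N1x N2x).
  case/nbhs_ballP => r r0 xr.
  have r20 : 0 < r / 2 by rewrite divr_gt0.
  exists (ball x (r / 2), [set d | d < r / 2]) => /=.
    by split; [exact: nbhsx_ballx | exact: nbhs_right_lt].
  case=> y d /= [xy dr] Ay z Az yz.
  have xz : ball x r z.
    by rewrite [r]splitr; apply: ball_triangle xy (le_ball (ltW dr) yz).
  have ry : ball x r y.
    by apply: le_ball xy; rewrite ler_pdivrMr // ler_pMr // ler1n.
  have [N1y _] := xr y ry Ay; have [_ N2z] := xr z xz Az.
  exact: (N12 (f y, f z)).
case/(filter_ex \o filterI (nbhs_right_gt 0)) => d /= [d0 Hd].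
by exists d => // y z Ay; exact: Hd.
Qed.

Section TopologicalGroup.
Variables (G : topologicalType) (mul : G -> G -> G) (inv : G -> G) (e : G).
Hypothesis tgG : topological_group mul inv e.

Lemma ldiv_nbhs_diag (U : set G) (p : G) :
  open U -> U e -> nbhs (p, p) [set q | U (mul (inv q.1) q.2)].
Proof.
case: tgG => _ _ mulVx cmul cinv oU Ue.
have cldiv : continuous (fun q : G * G => mul (inv q.1) q.2).
  move=> q; apply: (continuous_comp (f := fun q : G * G => (inv q.1, q.2))
    (g := fun q => mul q.1 q.2)); last exact: cmul.
  apply: cvg_pair; last exact: cvg_snd.
  by apply: continuous_comp; [exact: cvg_fst | exact: cinv].
by apply: cldiv; rewrite /= mulVx; exact: open_nbhs_nbhs.
Qed.

Lemma strongly_measurable_in_L0_closure_step_maps (R : realType) (f : R -> G) :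
  strongly_measurable f -> in_L0_closure mul inv e (@step_maps R G) f.
Proof.
move=> sf U oU Ue eps eps0.
have [A [cA AI mA fA]] := sf _ (divr_gt0 eps0 (ltr0Sn _ 1)).
have cptA : compact A := subclosed_compact cA (@segment_compact R 0 1) AI.
have [d d0 Hd] := compact_within_continuous_unif cptA fA
  (fun p => ldiv_nbhs_diag p oU Ue).
pose n := Num.truncn d^-1; pose N : R := n.+1%:R.
have Nd : N^-1 < d.
  rewrite invf_plt ?posrE //.
  have dV0 : 0 <= d^-1 by rewrite invr_ge0 ltW.
  by have /andP[] := truncn_itv dV0.
(* Cells that miss [A] get the junk sample [f 0]; they never matter. *)
pose g (i : 'I_n.+1) := f (xget 0 [set a | A a /\ step_index n a = i]).
exists (@hstep R G n g); split; first by exists n, g.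
exists (@I01 R `\` A); split.
- exact: measurableD (measurable_itv _) (closed_measurable cA).
- move=> x [Ix nU]; split => // Ax; apply: nU.
  rewrite hstepE /g inordK ?ltnS ?step_index_le //.
  pose cell := [set a | A a /\ step_index n a = step_index n x].
  have [Aa ka] : cell (xget 0 cell) by apply: xgetPex; exists x.
  set a := xget _ _ in Aa ka *.
  apply: Hd => //; rewrite /ball /=; apply: le_lt_trans Nd.
  have := step_index_itv n (AI a Aa).
  rewrite ka => /(dist_le_itv (step_index_itv n Ix)).
  by rewrite -mulrBl -natr1 addrAC subrr add0r mul1r.
- by apply: le_lt_trans mA _; rewrite lte_fin ltr_pdivrMr // ltr_pMr // ltr1n.
Qed.

End TopologicalGroup.

Theorem corollary4p2 (R : realType) (G : topologicalType)
  (mul : G -> G -> G) (inv : G -> G) (e : G) :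
  topological_group mul inv e ->
  (forall s : R -> G, @step_maps R G s -> strongly_measurable s) /\
  (forall f : R -> G, strongly_measurable f ->
     in_L0_closure mul inv e (@step_maps R G) f).
Proof.
move=> tg; split; last exact: strongly_measurable_in_L0_closure_step_maps.
by move=> s [n [g ->]]; exact: hstep_strongly_measurable.
Qed.
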